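(* Let $d\ge 2$ and let $V,W\in SU(d)$. The following are equivalent: (i) there exists a non-trivial tester $\mathcal{T}=(|\psi\rangle,\{|\chi_i\rangle\langle\chi_i|\}_{i=1}^d)$ such that $$H(\mathcal{T}|V)+H(\mathcal{T}|W)=0;$$ (ii) $V$ and $W$ are perfectly distinguishable, i.e. there exists a unit vector $|\phi\rangle\in\mathbb{C}^d$ with $\langle\phi|V^\dagger W|\phi\rangle=0$.
   Context: A tester is a pair $\mathcal{T}=(|\psi\rangle,\{|\chi_i\rangle\langle\chi_i|\}_{i=1}^d)$ consisting of a unit vector $|\psi\rangle\in\mathbb{C}^d$ (the input) and an orthonormal basis $\{|\chi_i\rangle\}_{i=1}^d$ of $\mathbb{C}^d$ (a projective measurement). For a unitary $U$, the entropy of testing $U$ with $\mathcal{T}$ is the Shannon entropy of the outcome distribution: $$H(\mathcal{T}|U)=-\sum_{i=1}^d|\langle\chi_i|U|\psi\rangle|^2\log|\langle\chi_i|U|\psi\rangle|^2,$$ with the convention $0\log 0=0$. For the pair $V,W$, a tester is called trivial if the two evolved inputs $V|\psi\rangle$ and $W|\psi\rangle$ are equal up to a global phase. In particular, this covers the situation where the input is sent by $V$ to a basis vector $|\chi_i\rangle$ that is an eigenvector of $WV^\dagger$. A tester is non-trivial otherwise. *)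

From mathcomp Require Import all_boot all_algebra.
From mathcomp Require Import complex.
From mathcomp Require Import reals exp.
Import GRing.Theory Num.Theory.

Set Implicit Arguments.
Unset Strict Implicit.
Unset Printing Implicit Defensive.

Local Open Scope ring_scope.
Local Open Scope complex_scope.

Section QDefs.
Variable R : realType.
Local Notation C := R[i].
Variable d : nat.

Definition adjmx m n (A : 'M[C]_(m, n)) : 'M[C]_(n, m) := (map_mx Num.conj A)^T.

Definition dotc (u v : 'cV[C]_d) : C := \sum_(k < d) (u k 0)^* * v k 0.

Definition sqmod (z : C) : R := (complex.Re z) ^+ 2 + (complex.Im z) ^+ 2.

Definition unit_vec (v : 'cV[C]_d) : Prop := dotc v v = 1.

Definition orthonormal_basis (chi : 'I_d -> 'cV[C]_d) : Prop :=
  forall i j, dotc (chi i) (chi j) = (i == j)%:R.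

Definition SU (U : 'M[C]_d) : Prop := U *m adjmx U = 1%:M /\ \det U = 1.

Definition tester (psi : 'cV[C]_d) (chi : 'I_d -> 'cV[C]_d) : Prop :=
  unit_vec psi /\ orthonormal_basis chi.

Definition outcome_prob (psi : 'cV[C]_d) (chi : 'I_d -> 'cV[C]_d)
  (U : 'M[C]_d) (i : 'I_d) : R := sqmod (dotc (chi i) (U *m psi)).

(* - p log p with the convention 0 log 0 = 0 *)
Definition entf (p : R) : R := if p == 0 then 0 else - (p * ln p).

Definition test_entropy (psi : 'cV[C]_d) (chi : 'I_d -> 'cV[C]_d)
  (U : 'M[C]_d) : R := \sum_(i < d) entf (outcome_prob psi chi U i).

(* trivial tester for the pair V, W: V psi and W psi agree up to a global phase *)
Definition trivial_tester (V W : 'M[C]_d) (psi : 'cV[C]_d) : Prop :=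
  exists c : C, sqmod c = 1 /\ W *m psi = c *: (V *m psi).

End QDefs.

(* Write <a|b> for [dotc a b].  The two conditions are linked by the identity
   <phi| V^+ W |phi> = <V phi | W phi>, so (ii) says that some unit input is
   sent by V and W to orthogonal states.

   - A measurement outcome distribution has Shannon entropy >= 0, with
     equality exactly when it is deterministic (a single outcome of
     probability 1).  For a unit vector v measured in an orthonormal basis
     {chi_i}, a deterministic outcome means v = c chi_i with |c| = 1.
   - (i) => (ii): both entropies vanish, so V psi = c chi_i and
     W psi = c' chi_j.  If i = j the tester would be trivial, hence i <> j
     and <V psi | W psi> = 0.
   - (ii) => (i): the orthonormal pair (V phi, W phi) extends to an
     orthonormal basis (Gram-Schmidt on the orthogonal complement); testing
     with input phi in this basis has zero entropy for both V and W, and it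
     is non-trivial since orthogonal unit vectors are not proportional. *)

From mathcomp Require Import all_boot all_algebra.
From mathcomp Require Import complex.
From mathcomp Require Import reals exp.
From mathcomp Require Import sesquilinear spectral.
From mathcomp Require Import ring lra.
Import GRing.Theory Num.Theory order.Order.TTheory.

Set Implicit Arguments.
Unset Strict Implicit.

Local Open Scope ring_scope.
Local Open Scope complex_scope.

Section SquaredModulus.
Variable R : realType.
Implicit Types x y z : R[i].

Lemma sqmodE z : (sqmod z)%:C = z * conjc z.
Proof.
case: z => a b; rewrite /sqmod /=.
by apply/eqP; rewrite eq_complex /=; apply/andP; split; apply/eqP; ring.
Qed.

Lemma sqmod_ge0 z : 0 <= sqmod z.
Proof. by rewrite /sqmod addr_ge0 ?sqr_ge0. Qed.

Lemma sqmod_eq0 z : sqmod z = 0 -> z = 0.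
Proof.
case: z => a b; rewrite /sqmod /= => h.
have ha : a ^+ 2 = 0 by have := sqr_ge0 a; have := sqr_ge0 b; lra.
have hb : b ^+ 2 = 0 by move: h; rewrite ha add0r.
by move/eqP: ha; move/eqP: hb; rewrite !sqrf_eq0 => /eqP -> /eqP ->.
Qed.

Lemma sqmodM x y : sqmod (x * y) = sqmod x * sqmod y.
Proof. by apply: (@complexI R); rewrite rmorphM /= !sqmodE rmorphM /=; ring. Qed.

Lemma sqmodJ z : sqmod (conjc z) = sqmod z.
Proof. by case: z => a b; rewrite /sqmod /= sqrrN. Qed.

Lemma sqmod0 : sqmod (0 : R[i]) = 0.
Proof. by rewrite /sqmod /= expr0n /= addr0. Qed.

Lemma sqmod1 : sqmod (1 : R[i]) = 1.
Proof. by rewrite /sqmod /= expr0n /= addr0 expr1n. Qed.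

End SquaredModulus.

Section Entropy.
Variable R : realType.
Variable I : finType.
Implicit Types p : I -> R.

Lemma entf0 : entf (0 : R) = 0.
Proof. by rewrite /entf eqxx. Qed.

Lemma entf1 : entf (1 : R) = 0.
Proof. by rewrite /entf ln1 mulr0 oppr0; case: ifP. Qed.

Lemma entf_ge0 (x : R) : 0 <= x -> x <= 1 -> 0 <= entf x.
Proof.
move=> x0 x1; rewrite /entf; case: ifP => // _.
by rewrite oppr_ge0 mulr_ge0_le0 // ln_le0.
Qed.

Lemma entf_eq0 (x : R) : 0 <= x -> entf x = 0 -> x = 0 \/ x = 1.
Proof.
move=> x0; rewrite /entf; case: eqP => [->|/eqP xn0]; first by left.
move/eqP; rewrite oppr_eq0 mulf_eq0 (negbTE xn0) /= ln_eq0; last first.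
  by rewrite lt_def xn0.
by move/eqP; right.
Qed.

Definition distribution p := (forall i, 0 <= p i) /\ \sum_i p i = 1.

Lemma distribution_le1 p i : distribution p -> p i <= 1.
Proof.
move=> [p0 p1]; rewrite -p1 (bigD1 i) //= lerDl.
by apply: sumr_ge0 => k _.
Qed.

Lemma entropy_ge0 p : distribution p -> 0 <= \sum_i entf (p i).
Proof.
move=> hp; apply: sumr_ge0 => i _.
by apply: entf_ge0; [exact: hp.1 | exact: distribution_le1].
Qed.

Lemma zero_one_point_mass p :
  distribution p -> (forall i, p i = 0 \/ p i = 1) ->
  exists i, p i = 1 /\ forall k, k != i -> p k = 0.
Proof.
move=> [p0 p1] p01.
have [i /eqP pi1 | no1] := pickP (fun i => p i == 1); last first.
  move: p1; rewrite big1 => [/eqP|i _]; first by rewrite eq_sym oner_eq0.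
  by case: (p01 i) => // pi1; move: (no1 i); rewrite pi1 eqxx.
exists i; split=> //.
have rest0 : \sum_(k | k != i) p k = 0.
  by move: p1; rewrite (bigD1 i) //= pi1 => /(canRL (addKr 1)) ->; rewrite addNr.
by move=> k ki; apply: (psumr_eq0P (fun k _ => p0 k) rest0).
Qed.

Lemma entropy_eq0 p : distribution p -> \sum_i entf (p i) = 0 ->
  exists i, p i = 1 /\ forall k, k != i -> p k = 0.
Proof.
move=> hp h0; apply: zero_one_point_mass => // i; apply: entf_eq0; first exact: hp.1.
apply: (psumr_eq0P _ h0) => // k _.
by apply: entf_ge0; [exact: hp.1 | exact: distribution_le1].
Qed.

End Entropy.

Section InnerProduct.
Variable R : realType.
Local Notation C := R[i].

Lemma adjmxK m n (A : 'M[C]_(m, n)) : adjmx (adjmx A) = A.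
Proof. by apply/matrixP => i j; rewrite !mxE conjCK. Qed.

Lemma adjmxM m n p (A : 'M[C]_(m, n)) (B : 'M[C]_(n, p)) :
  adjmx (A *m B) = adjmx B *m adjmx A.
Proof. by rewrite /adjmx map_mxM trmx_mul. Qed.

Lemma adjmx_col m1 m2 n (X : 'M[C]_(m1, n)) (Y : 'M[C]_(m2, n)) :
  adjmx (col_mx X Y) = row_mx (adjmx X) (adjmx Y).
Proof. by rewrite /adjmx map_col_mx tr_col_mx. Qed.

Lemma mul_adjmx_eq0C m n p (A : 'M[C]_(m, p)) (B : 'M[C]_(n, p)) :
  A *m adjmx B = 0 -> B *m adjmx A = 0.
Proof.
move=> hAB; rewrite -[B]adjmxK -adjmxM hAB.
by apply/matrixP => i j; rewrite !mxE; exact: conjc0.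
Qed.

(* [adjmx] agrees with the library's conjugate transpose, giving access to
   the theory of unitary matrices and Gram-Schmidt. *)
Lemma adjmx_sesqui m n (A : 'M[C]_(m, n)) : adjmx A = (A ^t Num.conj)%sesqui.
Proof. by apply/matrixP => i j; rewrite !mxE. Qed.

Variable d : nat.
Implicit Types u v : 'cV[C]_d.

Lemma dotcE u v : dotc u v = (adjmx u *m v) 0 0.
Proof. by rewrite /dotc !mxE; apply: eq_bigr => k _; rewrite !mxE. Qed.

Lemma adjmx_mul_dotc u v : adjmx u *m v = (dotc u v)%:M.
Proof. by rewrite dotcE -mx11_scalar. Qed.

Lemma dotc_adj (A : 'M[C]_d) u v : dotc u (A *m v) = dotc (adjmx A *m u) v.
Proof. by rewrite !dotcE adjmxM adjmxK mulmxA. Qed.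

Lemma dotcZr u v c : dotc u (c *: v) = c * dotc u v.
Proof. by rewrite /dotc mulr_sumr; apply: eq_bigr => k _; rewrite !mxE; ring. Qed.

Lemma dotcZl u v c : dotc (c *: u) v = conjc c * dotc u v.
Proof.
by rewrite /dotc mulr_sumr; apply: eq_bigr => k _; rewrite !mxE rmorphM /=; ring.
Qed.

Lemma dotcC u v : dotc v u = conjc (dotc u v).
Proof.
rewrite /dotc rmorph_sum; apply: eq_bigr => k _.
by rewrite rmorphM /= conjcK; ring.
Qed.

Lemma dotc_unitary (U : 'M[C]_d) u v : U *m adjmx U = 1%:M ->
  dotc (U *m u) (U *m v) = dotc u v.
Proof. by move=> /mulmx1C hU; rewrite dotc_adj mulmxA hU mul1mx. Qed.

Lemma dotc_adj_mul (V W : 'M[C]_d) v :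
  dotc v ((adjmx V *m W) *m v) = dotc (V *m v) (W *m v).
Proof. by rewrite -mulmxA dotc_adj adjmxK. Qed.

End InnerProduct.

Section OrthonormalBasis.
Variable R : realType.
Local Notation C := R[i].
Variable d : nat.
Variable chi : 'I_d -> 'cV[C]_d.
Hypothesis chi_on : orthonormal_basis chi.
Implicit Types v : 'cV[C]_d.

Definition basis_mx : 'M[C]_d := \matrix_(k, i) chi i k 0.

Lemma basis_mx_unitary : basis_mx *m adjmx basis_mx = 1%:M.
Proof.
apply: mulmx1C; apply/matrixP => i j.
by rewrite !mxE -chi_on /dotc; apply: eq_bigr => l _; rewrite !mxE.
Qed.

Lemma basis_expansion v k : v k 0 = \sum_i dotc (chi i) v * chi i k 0.
Proof.
have vE : v = basis_mx *m (adjmx basis_mx *m v).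
  by rewrite mulmxA basis_mx_unitary mul1mx.
rewrite {1}vE !mxE; apply: eq_bigr => i _; rewrite !mxE mulrC; congr (_ * _).
by rewrite dotcE !mxE; apply: eq_bigr => l _; rewrite !mxE.
Qed.

Lemma parseval v : dotc v v = \sum_i (sqmod (dotc (chi i) v))%:C.
Proof.
transitivity (\sum_k (v k 0)^* * v k 0); first by [].
under eq_bigr => k _ do rewrite [X in _ * X](basis_expansion v k) mulr_sumr.
rewrite exchange_big /=; apply: eq_bigr => i _.
by rewrite sqmodE -dotcC /dotc mulr_sumr; apply: eq_bigr => k _; ring.
Qed.

Lemma born_distribution v : unit_vec v ->
  distribution (fun i => sqmod (dotc (chi i) v)).
Proof.
move=> v1; split=> [i|]; first exact: sqmod_ge0.
by apply: (@complexI R); rewrite rmorph_sum /= -parseval v1.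
Qed.

Lemma zero_entropy_basis_state v : unit_vec v ->
  \sum_i entf (sqmod (dotc (chi i) v)) = 0 ->
  exists i c, sqmod c = 1 /\ v = c *: chi i.
Proof.
move=> v1 h0.
have [i [pi1 pk0]] := entropy_eq0 (born_distribution v1) h0.
exists i, (dotc (chi i) v); split=> //.
apply/matrixP => k j; rewrite ord1 !mxE (basis_expansion v k) (bigD1 i) //=.
by rewrite big1 ?addr0 // => l li; rewrite (sqmod_eq0 (pk0 l li)) mul0r.
Qed.

Lemma basis_state_zero_entropy i :
  \sum_k entf (sqmod (dotc (chi k) (chi i))) = 0.
Proof.
rewrite big1 // => k _; rewrite chi_on.
by case: eqP => _; rewrite ?sqmod0 ?sqmod1 ?entf0 ?entf1.
Qed.

End OrthonormalBasis.

Section Completion.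
Variable R : realType.
Local Notation C := R[i].
Variable d : nat.

Lemma rows_orthonormal_basis n (M : 'M[C]_(n, d)) (e : n = d) :
  M *m adjmx M = 1%:M ->
  orthonormal_basis (fun i => adjmx (row (cast_ord (esym e) i) M)).
Proof.
move=> hM i j; rewrite /dotc.
have /matrixP/(_ (cast_ord (esym e) i) (cast_ord (esym e) j)) := hM.
rewrite !mxE (inj_eq (@cast_ord_inj _ _ _)) => <-.
by apply: eq_bigr => k _; rewrite !mxE conjCK.
Qed.

(* A family of orthonormal rows can be completed by further orthonormal
   rows, orthogonal to it, to a square unitary matrix: apply Gram-Schmidt
   to a basis of the orthogonal complement. *)
Lemma orthonormal_rows_complement m (A : 'M[C]_(m, d)) :
  A *m adjmx A = 1%:M ->
  exists n (S : 'M[C]_(n, d)),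
    [/\ S *m adjmx S = 1%:M, A *m adjmx S = 0 & (m + n = d)%N].
Proof.
move=> hA; pose K := kermx (adjmx A); pose S := schmidt (row_base K).
have hS : S *m adjmx S = 1%:M.
  have /unitarymxP := @schmidt_unitarymx _ _ _ (row_base K) (rank_leq_col _).
  by rewrite adjmx_sesqui.
have hSA : S *m adjmx A = 0.
  apply/sub_kermxP; rewrite -/K.
  by rewrite /S (eqmx_schmidt_free (row_base_free K)) eq_row_base submx_refl.
exists (\rank K), S; split=> //; first exact: mul_adjmx_eq0C.
have unitA : A \is unitarymx by apply/unitarymxP; rewrite -adjmx_sesqui.
rewrite mxrank_ker mxrank_tr mxrank_map (mxrank_unitary unitA) subnKC //.
by rewrite -(mxrank_unitary unitA) rank_leq_col.
Qed.

Lemma extend_orthonormal_rows m (A : 'M[C]_(m, d)) :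
  A *m adjmx A = 1%:M ->
  exists (chi : 'I_d -> 'cV[C]_d) (f : 'I_m -> 'I_d),
    [/\ orthonormal_basis chi, injective f &
        forall k, chi (f k) = adjmx (row k A)].
Proof.
move=> hA; have [n [S [hS hAS hmn]]] := orthonormal_rows_complement hA.
pose M := col_mx A S.
have hM : M *m adjmx M = 1%:M.
  rewrite /M adjmx_col mul_col_row hA hS hAS (mul_adjmx_eq0C hAS).
  by rewrite [RHS]scalar_mx_block; congr block_mx; apply/matrixP => i j; rewrite !mxE.
exists (fun i => adjmx (row (cast_ord (esym hmn) i) M)).
exists (fun k => cast_ord hmn (lshift n k)); split.
- exact: rows_orthonormal_basis.
- by move=> k l /cast_ord_inj/lshift_inj.
- by move=> k; rewrite cast_ordK rowKu.
Qed.

Lemma extend_orthonormal_pair (u w : 'cV[C]_d) :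
  unit_vec u -> unit_vec w -> dotc u w = 0 ->
  exists chi : 'I_d -> 'cV[C]_d, orthonormal_basis chi /\
    exists i j, [/\ i != j, chi i = u & chi j = w].
Proof.
move=> u1 w1 uw.
pose A : 'M[C]_(1 + 1, d) := col_mx (adjmx u) (adjmx w).
have hA : A *m adjmx A = 1%:M.
  rewrite /A adjmx_col mul_col_row !adjmxK !adjmx_mul_dotc u1 w1 uw.
  rewrite dotcC uw conjc0 [RHS]scalar_mx_block.
  by congr block_mx; apply/matrixP => i j; rewrite !mxE; case: eqP.
have [chi [f [chi_on f_inj chiA]]] := extend_orthonormal_rows hA.
exists chi; split=> //; exists (f (lshift 1 ord0)), (f (rshift 1 ord0)); split.
- by rewrite (inj_eq f_inj) -val_eqE.
- by rewrite chiA rowKu row_id adjmxK.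
- by rewrite chiA rowKd row_id adjmxK.
Qed.

End Completion.

Section Testers.
Variable R : realType.
Local Notation C := R[i].
Variable d : nat.
Implicit Types (psi : 'cV[C]_d) (chi : 'I_d -> 'cV[C]_d) (U : 'M[C]_d).

Lemma unit_vec_unitary U psi :
  U *m adjmx U = 1%:M -> unit_vec psi -> unit_vec (U *m psi).
Proof. by move=> hU psi1; rewrite /unit_vec dotc_unitary. Qed.

Lemma test_entropy_ge0 psi chi U : tester psi chi -> U *m adjmx U = 1%:M ->
  0 <= test_entropy psi chi U.
Proof.
move=> [psi1 chi_on] hU.
exact/entropy_ge0/born_distribution/unit_vec_unitary.
Qed.

Lemma zero_test_entropy psi chi U : tester psi chi -> U *m adjmx U = 1%:M ->
  test_entropy psi chi U = 0 ->
  exists i c, sqmod c = 1 /\ U *m psi = c *: chi i.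
Proof.
move=> [psi1 chi_on] hU; apply: zero_entropy_basis_state => //.
exact: unit_vec_unitary.
Qed.

Variables V W : 'M[C]_d.
Hypotheses (hV : V *m adjmx V = 1%:M) (hW : W *m adjmx W = 1%:M).

(* (i) => (ii): a non-trivial zero-entropy tester sends its input through V
   and W to two distinct basis vectors, which are orthogonal. *)
Lemma distinguishable_of_zero_entropy psi chi :
  tester psi chi -> ~ trivial_tester V W psi ->
  test_entropy psi chi V + test_entropy psi chi W = 0 ->
  dotc (V *m psi) (W *m psi) = 0.
Proof.
move=> T nontriv h0.
have hV0 := test_entropy_ge0 T hV; have hW0 := test_entropy_ge0 T hW.
have [i [c [c1 Vpsi]]] : exists i c, sqmod c = 1 /\ V *m psi = c *: chi i.
  by apply: zero_test_entropy => //; lra.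
have [j [c' [c'1 Wpsi]]] : exists j c', sqmod c' = 1 /\ W *m psi = c' *: chi j.
  by apply: zero_test_entropy => //; lra.
rewrite Vpsi Wpsi dotcZl dotcZr T.2.
have [ij|] := eqVneq i j; last by rewrite !mulr0.
case: nontriv; exists (c' * conjc c); split.
  by rewrite sqmodM sqmodJ c1 c'1 mulr1.
by rewrite Vpsi Wpsi ij scalerA -mulrA [conjc c * c]mulrC -sqmodE c1 mulr1.
Qed.

(* (ii) => (i): measure in a basis containing the orthogonal states V phi
   and W phi; both outcomes are deterministic, and the tester is
   non-trivial because orthogonal unit vectors are not proportional. *)
Lemma zero_entropy_of_distinguishable phi :
  unit_vec phi -> dotc (V *m phi) (W *m phi) = 0 ->
  exists chi, [/\ tester phi chi, ~ trivial_tester V W phi &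
                 test_entropy phi chi V + test_entropy phi chi W = 0].
Proof.
move=> phi1 orth.
have V1 := unit_vec_unitary hV phi1; have W1 := unit_vec_unitary hW phi1.
have [chi [chi_on [i [j [_ chiV chiW]]]]] := extend_orthonormal_pair V1 W1 orth.
exists chi; split=> //.
- move=> [c [c1 Wphi]]; move: orth; rewrite Wphi dotcZr V1 mulr1 => c0.
  by move: c1; rewrite c0 sqmod0 => /eqP; rewrite eq_sym oner_eq0.
- by rewrite /test_entropy /outcome_prob -chiV -chiW !(basis_state_zero_entropy chi_on) addr0.
Qed.

End Testers.

Unset Implicit Arguments.

(* Only the unitarity part of V, W in SU(d) is needed, and the assumption
   d >= 2 is implied by either side (two orthogonal unit vectors). *)
Theorem proposition1 (R : realType) (d : nat) (hd : (2 <= d)%N)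
  (V W : 'M[R[i]]_d) (hV : SU V) (hW : SU W) :
  (exists (psi : 'cV[R[i]]_d) (chi : 'I_d -> 'cV[R[i]]_d),
      tester psi chi /\ ~ trivial_tester V W psi /\
      test_entropy psi chi V + test_entropy psi chi W = 0)
  <->
  (exists phi : 'cV[R[i]]_d,
      unit_vec phi /\ dotc phi ((adjmx V *m W) *m phi) = 0).
Proof.
have [[unitV _] [unitW _]] := (hV, hW).
split.
- move=> [psi [chi [T [nontriv h0]]]]; exists psi; split; first exact: T.1.
  rewrite dotc_adj_mul.
  exact: (distinguishable_of_zero_entropy unitV unitW T nontriv h0).
- move=> [phi [phi1]]; rewrite dotc_adj_mul => orth.
  have [chi [T nontriv h0]] := zero_entropy_of_distinguishable unitV unitW phi1 orth.
  by exists phi, chi.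
Qed.
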